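(* For $(\alpha,\beta)\in\mathbb{R}^2$, let $\mathfrak{m}_{\alpha,\beta}$ be the $8$-dimensional real Lie algebra with a basis $\{v^1,\dots,v^8\}$ of its dual satisfying $$dv^1=dv^2=dv^3=0,\quad dv^4=v^{13},\quad dv^5=v^{23},\quad dv^6=v^{14}+v^{25}-v^{35},$$ $$dv^7=\alpha v^{12}+v^{15}+v^{24}+v^{34},\quad dv^8=v^{16}-2\beta v^{25}+v^{27}-\beta v^{35}-v^{45},$$ and let $\{v'^1,\dots,v'^8\}$ be the analogous basis of $\mathfrak{m}_{\alpha',\beta'}^*$. Suppose $f:\mathfrak{m}_{\alpha,\beta}\to\mathfrak{m}_{\alpha',\beta'}$ is a Lie algebra isomorphism and let $F:\bigwedge^*\mathfrak{m}_{\alpha',\beta'}^*\to\bigwedge^*\mathfrak{m}_{\alpha,\beta}^*$ be the extension of its dual, written $F(v'^i)=\sum_{j=1}^8\lambda^i_j v^j$. Then $$\alpha'=\pm\lambda^1_1\,\alpha,\qquad \beta'=\lambda^1_1\,\beta.$$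
   Context: $v^{ij}=v^i\wedge v^j$ and $d$ is the Chevalley–Eilenberg differential; $F$ commutes with $d$. *)

From HB Require Import structures.
From mathcomp Require Import all_boot all_order all_algebra.
From mathcomp Require Import reals.
Set Implicit Arguments. Unset Strict Implicit. Unset Printing Implicit Defensive.
Import Order.TTheory GRing.Theory Num.Theory.
Local Open Scope ring_scope.

(* The Lie algebra m_{alpha,beta} is modelled on column vectors 'cV[R]_8,
   with standard basis e_1..e_8 (0-indexed: e_0..e_7) dual to v^1..v^8.
   [d_terms a b k] lists the terms (i, j, c) with i < j, meaning c * v^{(i+1)(j+1)},
   of d v^{k+1}  (0-indexed). *)
Definition d_terms {R : realType} (a b : R) (k : nat) : seq (nat * nat * R) :=
  match k with
  | 3 => [:: (0, 2, 1)]
  | 4 => [:: (1, 2, 1)]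
  | 5 => [:: (0, 3, 1); (1, 4, 1); (2, 4, -1)]
  | 6 => [:: (0, 1, a); (0, 4, 1); (1, 3, 1); (2, 3, 1)]
  | 7 => [:: (0, 5, 1); (1, 4, -(2 * b)); (1, 6, 1); (2, 4, - b); (3, 4, -1)]
  | _ => [::]
  end.

(* dv^{k+1}(e_i, e_j), with the convention v^{pq}(e_p,e_q) = 1 = - v^{pq}(e_q,e_p). *)
Definition dcoef {R : realType} (a b : R) (k i j : 'I_8) : R :=
  \sum_(t <- d_terms a b k)
     t.2 * (((i == t.1.1 :> nat) && (j == t.1.2 :> nat))%:R
            - ((i == t.1.2 :> nat) && (j == t.1.1 :> nat))%:R).

(* Lie bracket of m_{a,b}, determined by the Chevalley-Eilenberg convention
   d theta (x, y) = - theta ([x, y]) for 1-forms theta. *)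
Definition mbracket {R : realType} (a b : R) (x y : 'cV[R]_8) : 'cV[R]_8 :=
  \col_(k < 8) - \sum_(i < 8) \sum_(j < 8) dcoef a b k i j * x i 0 * y j 0.

(* A linear map f : m_{a,b} -> m_{a',b'} given by its matrix M (f x = M *m x)
   is a Lie algebra isomorphism. The dual map F satisfies
   F(v'^i) = v'^i o f = \sum_j M i j v^j, so lambda^i_j = M i j. *)
Definition lie_iso {R : realType} (a b a' b' : R) (M : 'M[R]_8) : Prop :=
  M \in unitmx /\
  forall x y : 'cV[R]_8, M *m mbracket a b x y = mbracket a' b' (M *m x) (M *m y).

From HB Require Import structures.
From mathcomp Require Import all_boot all_order all_algebra.
From mathcomp Require Import reals lra ring.
Import Order.TTheory GRing.Theory Num.Theory.
Local Open Scope ring_scope.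

(* Write λ^i_j for the entries of M.  Since F commutes with d, every triple
   (k, p, q) gives a polynomial identity F(dv'^k)(e_p, e_q) = d(F v'^k)(e_p, e_q)
   between the λ's and α, β, α', β'.  F preserves the filtration dual to the lower
   central series, <v^1,v^2,v^3> ⊂ <v^1,...,v^5> ⊂ <v^1,...,v^7>, so M is block lower
   triangular; invertibility of its top 3x3 block and two minor relations force
   λ^3_1 = λ^3_2 = 0.  The weight-two and weight-three identities then give
   λ^1_2 = λ^2_1 = λ^1_3 = λ^2_3 = 0, λ^2_2 = λ^3_3 and (λ^1_1)^2 = (λ^3_3)^2, and
   finally dv^7 yields α' = λ^3_3 α = ±λ^1_1 α while dv^8 yields β' = λ^1_1 β. *)

Lemma det_mx22 (R : comRingType) (A : 'M[R]_2) : \det A = A 0 0 * A 1 1 - A 0 1 * A 1 0.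
Proof.
pose a i j := A (inord i) (inord j).
have aE i j : A i j = a i j by rewrite /a !inord_val.
rewrite (expand_det_row _ 0) !big_ord_recl big_ord0 /cofactor !det_mx11 !mxE !aE /bump /=.
ring.
Qed.

Lemma det_mx33 (R : comRingType) (A : 'M[R]_3) : \det A =
  A 0 0 * (A 1 1 * A 2 2 - A 1 2 * A 2 1) - A 0 1 * (A 1 0 * A 2 2 - A 1 2 * A 2 0)
  + A 0 2 * (A 1 0 * A 2 1 - A 1 1 * A 2 0).
Proof.
pose a i j := A (inord i) (inord j).
have aE i j : A i j = a i j by rewrite /a !inord_val.
rewrite (expand_det_row _ 0) !big_ord_recl big_ord0 /cofactor !det_mx22 !mxE !aE /bump /=.
ring.
Qed.

Lemma unitmx_ulsubmx {F : fieldType} {m n : nat} {A : 'M[F]_(m + n)} :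
  ursubmx A = 0 -> A \in unitmx -> ulsubmx A \in unitmx.
Proof.
by move=> A0; rewrite !unitmxE -[A in \det A]submxK A0 det_lblock unitrM => /andP[].
Qed.

Lemma unitmx3_row2 {F : fieldType} {A : 'M[F]_3} :
    A \in unitmx -> A 0 0 * A 2 1 = A 2 0 * A 0 1 -> A 1 0 * A 2 1 = A 2 0 * A 1 1 ->
  [/\ A 2 0 = 0, A 2 1 = 0, A 2 2 != 0 & A 0 0 * A 1 1 - A 0 1 * A 1 0 != 0].
Proof.
rewrite unitmxE unitfE => det_neq0 r1 r2.
have row2_det : A 2 0 * \det A = 0 /\ A 2 1 * \det A = 0.
  rewrite det_mx33; split.
  - transitivity ((A 0 0 * A 2 1 - A 2 0 * A 0 1) * (A 2 2 * A 1 0 - A 1 2 * A 2 0)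
      + (A 1 0 * A 2 1 - A 2 0 * A 1 1) * (A 0 2 * A 2 0 - A 2 2 * A 0 0)); first by ring.
    by rewrite r1 r2 !subrr !mul0r addr0.
  - transitivity ((A 0 0 * A 2 1 - A 2 0 * A 0 1) * (A 2 2 * A 1 1 - A 1 2 * A 2 1)
      + (A 1 0 * A 2 1 - A 2 0 * A 1 1) * (A 0 2 * A 2 1 - A 2 2 * A 0 1)); first by ring.
    by rewrite r1 r2 !subrr !mul0r addr0.
have [A20 A21] : A 2 0 = 0 /\ A 2 1 = 0.
  by case: row2_det => /eqP + /eqP; rewrite !mulf_eq0 (negPf det_neq0) !orbF => /eqP + /eqP.
have : \det A = A 2 2 * (A 0 0 * A 1 1 - A 0 1 * A 1 0) by rewrite det_mx33 A20 A21; ring.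
by move: det_neq0 => /[swap] ->; rewrite mulf_eq0 negb_or => /andP[].
Qed.

(* v^(i+1) vanishes on the (lcs_weight i + 2)-nd term of the lower central series. *)
Definition lcs_weight (i : nat) : nat := (2 < i) + (4 < i) + (6 < i).

Section ChevalleyEilenberg.
Context {R : realType}.

Definition d_form (a b : R) (k : nat) (x y : nat -> R) : R :=
  \sum_(t <- d_terms a b k) t.2 * (x t.1.1 * y t.1.2 - x t.1.2 * y t.1.1).

Lemma d_terms_lt8 (a b : R) (k : nat) :
  all (fun t : nat * nat * R => (t.1.1 < 8)%N && (t.1.2 < 8)%N) (d_terms a b k).
Proof. by do 8?[case: k => [|k]]. Qed.

Lemma eq_d_form (a b : R) (k : nat) {x x' y y' : nat -> R} :
  {in gtn 8, x =1 x'} -> {in gtn 8, y =1 y'} -> d_form a b k x y = d_form a b k x' y'.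
Proof.
move=> eq_x eq_y; rewrite /d_form !big_seq; apply: eq_bigr => t t_in.
have /allP/(_ t t_in)/andP[t1 t2] := d_terms_lt8 a b k.
by rewrite !eq_x ?eq_y.
Qed.

Lemma sum_pair_indicator (f : 'I_8 -> 'I_8 -> R) (p q : nat) : (p < 8)%N -> (q < 8)%N ->
  \sum_(i < 8) \sum_(j < 8) ((i == p :> nat) && (j == q :> nat))%:R * f i j
  = f (inord p) (inord q).
Proof.
move=> p8 q8; rewrite (bigD1 (inord p)) //= [X in _ + X]big1 => [|i /negPf ip].
  rewrite addr0 (bigD1 (inord q)) //= [X in _ + X]big1 => [|j /negPf jq].
    by rewrite !inordK // !eqxx mul1r !addr0.
  by rewrite -(inj_eq val_inj) /= inordK // in jq; rewrite jq andbF mul0r.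
apply: big1 => j _.
by rewrite -(inj_eq val_inj) /= inordK // in ip; rewrite ip mul0r.
Qed.

Lemma mbracketE (a b : R) (x y : 'cV[R]_8) (k : 'I_8) :
  mbracket a b x y k 0 = - d_form a b k (fun n => x (inord n) 0) (fun n => y (inord n) 0).
Proof.
rewrite mxE /d_form /dcoef; congr (- _).
transitivity (\sum_(t <- d_terms a b k) t.2 *
  (\sum_(i < 8) \sum_(j < 8) ((i == t.1.1 :> nat) && (j == t.1.2 :> nat))%:R * (x i 0 * y j 0)
   - \sum_(i < 8) \sum_(j < 8) ((i == t.1.2 :> nat) && (j == t.1.1 :> nat))%:R * (x i 0 * y j 0))).
  under eq_bigr do under eq_bigr do rewrite -mulrA big_distrl /=.
  under eq_bigr do rewrite exchange_big /=.
  rewrite exchange_big /=; apply: eq_bigr => t _.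
  rewrite -!sumrB mulr_sumr; apply: eq_bigr => i _.
  by rewrite -!sumrB mulr_sumr; apply: eq_bigr => j _; rewrite -mulrA -mulrBl.
rewrite !big_seq; apply: eq_bigr => t t_in.
have /allP/(_ t t_in)/andP[t1 t2] := d_terms_lt8 a b k.
by rewrite !(sum_pair_indicator (fun i j : 'I_8 => x i 0 * y j 0)).
Qed.

(* lam M i j is λ^(i+1)_(j+1). *)
Definition lam (M : 'M[R]_8) (i j : nat) : R := M (inord i) (inord j).

(* F(dv'^(k+1)) = d(F v'^(k+1)), evaluated on (e_(p+1), e_(q+1)). *)
Lemma pullback_d {a b a' b' : R} {M : 'M[R]_8} :
    (forall x y, M *m mbracket a b x y = mbracket a' b' (M *m x) (M *m y)) ->
  forall k p q, (k < 8)%N -> (p < 8)%N -> (q < 8)%N ->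
  \sum_(0 <= j < 8) lam M k j * d_form a b j (fun n => (n == p)%:R) (fun n => (n == q)%:R)
  = d_form a' b' k (lam M ^~ p) (lam M ^~ q).
Proof.
move=> hom k p q k8 p8 q8.
pose e n : 'cV[R]_8 := delta_mx (inord n) 0.
have eE n : (n < 8)%N -> {in gtn 8, forall m, e n (inord m) 0 = (m == n)%:R}.
  by move=> n8 m m8; rewrite mxE eqxx andbT -(inj_eq val_inj) /= !inordK.
have MeE n : {in gtn 8, forall m, (M *m e n) (inord m) 0 = lam M m n}.
  by move=> m _; rewrite -colE mxE.
have := congr1 (fun A : 'cV[R]_8 => A (inord k) 0) (hom (e p) (e q)).
rewrite mbracketE inordK // mxE => eq_k.
rewrite -(eq_d_form _ _ _ (MeE p) (MeE q)) -[RHS]opprK -eq_k -sumrN big_mkord.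
apply: eq_bigr => j _; rewrite mbracketE mulrN opprK /lam inord_val.
by rewrite (eq_d_form _ _ _ (eE p p8) (eE q q8)).
Qed.

Ltac subst_entries e :=
  repeat match goal with
  | h : lam _ ?i ?j = _ |- _ =>
      lazymatch type of e with context [lam _ i j] => rewrite h in e end
  end.

(* The indices stored in d_terms are ring-scope numerals of type nat (e.g. 5%:R);
   they are normalised so that they match the entries already known. *)
Tactic Notation "expand" constr(t) "as" ident(e) :=
  have e := t erefl erefl erefl;
  rewrite /d_form /index_iota /= !big_cons !big_nil /= ?natn in e;
  rewrite -?[(0%R : nat)]/0%N -?[(1%R : nat)]/1%N in e;
  subst_entries e.

Section LieIso.
Context {a b a' b' : R} {M : 'M[R]_8}.
Hypothesis hom : forall x y, M *m mbracket a b x y = mbracket a' b' (M *m x) (M *m y).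
Let commute_d := pullback_d hom.

Lemma lam_lcs i j : (j < 8)%N -> (lcs_weight i < lcs_weight j)%N -> lam M i j = 0.
Proof.
elim/ltn_ind: i j => i IH j.
case: i IH => [|[|[|[|[|[|[|i]]]]]]] IH; case: j => [|[|[|[|[|[|[|[|j]]]]]]]] //= _ _.
(* [e_(p+1), e_(q+1)] = - e_(j+1) for each pair below, so the identity isolates lam M i j. *)
all: lazymatch goal with
  | |- lam _ ?i 3 = 0 => expand (commute_d i 0 2) as e
  | |- lam _ ?i 4 = 0 => expand (commute_d i 1 2) as e
  | |- lam _ ?i 5 = 0 => expand (commute_d i 0 3) as e
  | |- lam _ ?i 6 = 0 => expand (commute_d i 0 4) as e
  | |- lam _ ?i 7 = 0 => expand (commute_d i 0 5) as e
  end;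
  repeat match type of e with
  | context [lam _ ?m ?n] => rewrite (IH m erefl n erefl erefl) in e
  end; lra.
Qed.

Ltac drop_lcs e := repeat match type of e with
  | context [lam _ ?m ?n] => rewrite (lam_lcs m n erefl erefl) in e
  end.

Tactic Notation "by_expand" constr(t) :=
  let e := fresh "e" in expand t as e; drop_lcs e; subst_entries e; lra.

Lemma lam_minors :
  lam M 0 0 * lam M 2 1 = lam M 2 0 * lam M 0 1 /\
  lam M 1 0 * lam M 2 1 = lam M 2 0 * lam M 1 1.
Proof. by split; [by_expand (commute_d 3 0 1) | by_expand (commute_d 4 0 1)]. Qed.

Lemma ursubmx_eq0 : ursubmx (M : 'M_(3 + 5)) = 0.
Proof.
apply/matrixP => i j; rewrite !mxE.
have i8 : (i < 8)%N by apply: (@leq_trans 3).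
have j8 : (3 + j < 8)%N by rewrite ltn_add2l.
have -> : lshift 5 i = inord i by apply: val_inj; rewrite /= inordK.
have -> : rshift 3 j = inord (3 + j) by apply: val_inj; rewrite /= inordK.
by apply: lam_lcs => //; case: i {i8} => [[|[|[|]]]].
Qed.

Lemma ulsubmx_lam (i j : 'I_3) : ulsubmx (M : 'M_(3 + 5)) i j = lam M i j.
Proof.
have inordE (k : 'I_3) : inord k = lshift 5 k :> 'I_8.
  by apply: val_inj; rewrite /= inordK // (@leq_trans 3).
by rewrite !mxE /lam !inordE.
Qed.

Lemma lam_top_block : M \in unitmx ->
  [/\ lam M 2 0 = 0, lam M 2 1 = 0, lam M 2 2 != 0
    & lam M 0 0 * lam M 1 1 - lam M 0 1 * lam M 1 0 != 0].
Proof.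
move=> M_unit; have [minor0 minor1] := lam_minors.
have := unitmx3_row2 (unitmx_ulsubmx ursubmx_eq0 M_unit).
by rewrite !ulsubmx_lam => /(_ minor0 minor1).
Qed.

Section TopBlock.
Hypotheses (l20 : lam M 2 0 = 0) (l21 : lam M 2 1 = 0).
Hypotheses (l22_neq0 : lam M 2 2 != 0)
           (det2_neq0 : lam M 0 0 * lam M 1 1 - lam M 0 1 * lam M 1 0 != 0).

Lemma lam_weight1_block :
  [/\ lam M 3 3 = lam M 0 0 * lam M 2 2, lam M 3 4 = lam M 0 1 * lam M 2 2,
      lam M 4 3 = lam M 1 0 * lam M 2 2 & lam M 4 4 = lam M 1 1 * lam M 2 2].
Proof.
by split; [by_expand (commute_d 3 0 2) | by_expand (commute_d 3 1 2)
          | by_expand (commute_d 4 0 2) | by_expand (commute_d 4 1 2)].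
Qed.

Lemma lam_weight2_block :
  [/\ lam M 5 5 = lam M 2 2 * (lam M 0 0 ^+ 2 + lam M 1 0 ^+ 2),
      lam M 5 6 = lam M 2 2 * (lam M 0 0 * lam M 0 1 + lam M 1 0 * lam M 1 1),
      lam M 6 5 = 2 * lam M 2 2 * lam M 0 0 * lam M 1 0,
      lam M 6 6 = lam M 2 2 * (lam M 0 0 * lam M 1 1 + lam M 1 0 * lam M 0 1) &
      lam M 7 7 = lam M 2 2 ^+ 2 * (lam M 0 0 * lam M 1 1 - lam M 0 1 * lam M 1 0)].
Proof.
have [? ? ? ?] := lam_weight1_block.
by split; [by_expand (commute_d 5 0 3) | by_expand (commute_d 5 0 4)
          | by_expand (commute_d 6 0 3) | by_expand (commute_d 6 0 4)
          | by_expand (commute_d 7 3 4)].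
Qed.

Lemma lam_top_left :
  [/\ lam M 0 1 = 0, lam M 1 0 = 0, lam M 1 1 = lam M 2 2, lam M 0 2 = 0 & lam M 1 2 = 0] /\
  lam M 0 0 ^+ 2 = lam M 2 2 ^+ 2.
Proof.
have [? ? ? ?] := lam_weight1_block.
have [? ? ? ? ?] := lam_weight2_block.
have col_norms : lam M 0 0 ^+ 2 + lam M 1 0 ^+ 2 = lam M 0 1 ^+ 2 + lam M 1 1 ^+ 2.
  by apply: (mulfI l22_neq0); by_expand (commute_d 5 1 4).
have col_dot : lam M 0 0 * lam M 1 0 = lam M 0 1 * lam M 1 1.
  by apply: (mulfI l22_neq0); by_expand (commute_d 6 1 4).
have col_cubic : lam M 0 1 * (lam M 0 0 ^+ 2 + lam M 1 0 ^+ 2)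
                  + 2 * lam M 1 1 * (lam M 0 0 * lam M 1 0) = 0.
  by apply: (mulfI l22_neq0); rewrite mulr0; by_expand (commute_d 7 1 5).
have l01 : lam M 0 1 = 0.
  have : lam M 0 1 * (lam M 0 1 ^+ 2 + 3 * lam M 1 1 ^+ 2) = 0.
    by move: col_cubic; rewrite col_norms col_dot => <-; ring.
  move/eqP; rewrite mulf_eq0 => /orP[/eqP // | /eqP sum_sqr0].
  apply/eqP; rewrite -sqrf_eq0; apply/eqP.
  by have := sqr_ge0 (lam M 0 1); have := sqr_ge0 (lam M 1 1); lra.
have [l00_neq0 l11_neq0] : lam M 0 0 != 0 /\ lam M 1 1 != 0.
  by apply/andP; move: det2_neq0; rewrite l01 mul0r subr0 mulf_eq0 negb_or.
have l10 : lam M 1 0 = 0 by apply: (mulfI l00_neq0); rewrite col_dot l01 !mul0r mulr0.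
have l22_l11 : lam M 2 2 * lam M 1 1 = lam M 0 0 ^+ 2.
  by apply: (mulfI l22_neq0); apply: (mulfI l00_neq0); by_expand (commute_d 7 0 5).
have l11 : lam M 1 1 = lam M 2 2.
  apply: (mulfI l22_neq0); apply: (mulfI l00_neq0); apply: (mulfI l11_neq0).
  by by_expand (commute_d 7 1 6).
have l00_sqr : lam M 0 0 ^+ 2 = lam M 2 2 ^+ 2 by rewrite -l22_l11 l11.
have l02 : lam M 0 2 = 0.
  by apply: (mulfI l22_neq0); apply: (mulfI l00_neq0); rewrite !mulr0; by_expand (commute_d 5 2 3).
have l12 : lam M 1 2 = 0.
  apply: (mulfI l22_neq0); apply: (mulfI l22_neq0); rewrite !mulr0.
  by have := congr1 (fun t => lam M 2 2 * t) l00_sqr; by_expand (commute_d 5 2 4).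
by [].
Qed.

Lemma alpha_transform : a' = lam M 2 2 * a.
Proof.
have [? ? ? ?] := lam_weight1_block.
have [? ? ? ? ?] := lam_weight2_block.
have [[? ? ? ? ?] l00_sqr] := lam_top_left.
have l00_neq0 : lam M 0 0 != 0 by rewrite -sqrf_eq0 l00_sqr sqrf_eq0.
have l41 : lam M 0 0 * lam M 4 1 = lam M 2 2 * lam M 3 0.
  have ? : lam M 5 4 = lam M 2 2 * lam M 4 2 + lam M 2 2 * lam M 4 1.
    by by_expand (commute_d 5 1 2).
  have ? : lam M 7 6 = lam M 0 0 * (lam M 2 2 * lam M 4 2 + lam M 2 2 * lam M 4 1)
                       - lam M 2 2 ^+ 2 * lam M 3 0.
    by by_expand (commute_d 7 0 4).
  by apply: (mulfI l22_neq0); by_expand (commute_d 7 2 3).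
by apply: (mulfI (mulf_neq0 l00_neq0 l22_neq0)); by_expand (commute_d 6 0 1).
Qed.

Lemma beta_transform : b' = lam M 0 0 * b.
Proof.
have [? ? ? ?] := lam_weight1_block.
have [? ? ? ? ?] := lam_weight2_block.
have [[? ? ? ? ?] l00_sqr] := lam_top_left.
have l31 : lam M 0 0 * lam M 3 1 = lam M 2 2 * lam M 4 0 by by_expand (commute_d 5 0 1).
have ? : lam M 5 3 = lam M 0 0 * lam M 3 2 + lam M 2 2 * lam M 4 0.
  by by_expand (commute_d 5 0 2).
have ? : lam M 7 5 = lam M 0 0 * (lam M 0 0 * lam M 3 2 + lam M 2 2 * lam M 4 0)
                     + lam M 0 0 * lam M 2 2 * lam M 4 0.
  by by_expand (commute_d 7 0 3).
have ? : lam M 6 4 = lam M 2 2 * lam M 3 2 - lam M 2 2 * lam M 3 1.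
  by by_expand (commute_d 6 1 2).
have l31_sqr : lam M 0 0 * (lam M 2 2 * lam M 4 0) = lam M 2 2 ^+ 2 * lam M 3 1.
  by rewrite -l31 mulrA -expr2 l00_sqr.
have l32_sqr : lam M 0 0 ^+ 2 * lam M 3 2 = lam M 2 2 ^+ 2 * lam M 3 2 by rewrite l00_sqr.
have d8_25 : 2 * lam M 2 2 ^+ 2 * lam M 3 1 = lam M 2 2 ^+ 3 * (lam M 0 0 * b - b').
  by by_expand (commute_d 7 1 4).
have d8_35 : - (2 * lam M 2 2 ^+ 2 * lam M 3 1) = lam M 2 2 ^+ 3 * (lam M 0 0 * b - b').
  by by_expand (commute_d 7 2 4).
by apply: (mulfI (expf_neq0 3 l22_neq0)); lra.
Qed.

End TopBlock.
End LieIso.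
End ChevalleyEilenberg.

Theorem lemma3p6 (R : realType) (alpha beta alpha' beta' : R) (M : 'M[R]_8) :
  lie_iso alpha beta alpha' beta' M ->
  (alpha' = M ord0 ord0 * alpha \/ alpha' = - (M ord0 ord0 * alpha)) /\
  beta' = M ord0 ord0 * beta.
Proof.
move=> [M_unit hom].
have [l20 l21 l22_neq0 det2_neq0] := lam_top_block hom M_unit.
have [_ l00_sqr] := lam_top_left hom l20 l21 l22_neq0 det2_neq0.
have -> : M ord0 ord0 = lam M 0 0.
  by rewrite /lam (_ : inord 0 = ord0) //; apply: val_inj; rewrite /= inordK.
rewrite (alpha_transform hom l20 l21 l22_neq0 det2_neq0).
rewrite (beta_transform hom l20 l21 l22_neq0 det2_neq0); split=> //.
move/eqP: l00_sqr; rewrite eqf_sqr => /orP[] /eqP ->; first by left.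
by right; rewrite mulNr opprK.
Qed.
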